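(* Let $0<c<1/2$. For every $B\in\mathcal F$ and every integer $m\ge0$, $$g(m,B)\le\frac{2c}{1-c}\,\big|\mathrm{OPT}^m_{\mathrm{large}}(B)\big|,$$ where $$g(m,B)=\sum_{i\in\mathrm{OPT}^m_{\mathrm{large}}(B)}\ \sum_{B'\in\mathrm{Chain}[M(i),B]} c^{\,1+\mathrm{brank}(i,B')}.$$
   Context: Let $U$ be a finite ground set with weight function $w:U\to\mathbb{R}_{\ge0}$ taking pairwise distinct values. Let $\mathcal F$ be a laminar family of subsets of $U$ (for any $A,B\in\mathcal F$: $A\subseteq B$, $B\subseteq A$, or $A\cap B=\emptyset$) with $U\in\mathcal F$; each $A\in\mathcal F$ has a positive integer capacity $\mu(A)$, with $\mu(A)<\mu(B)$ whenever $A\subsetneq B$. A set $X\subseteq U$ is independent iff $|X\cap A|\le\mu(A)$ for all $A\in\mathcal F$. For $i\in U$, $M(i)$ denotes the minimal member of $\mathcal F$ containing $i$. For $A\subseteq B$ in $\mathcal F$, $\mathrm{Chain}[A,B]$ is the sequence of all $B'\in\mathcal F$ with $A\subseteq B'\subseteq B$, ordered by inclusion from $A$ up to $B$. For $B\in\mathcal F$, $\mathrm{OPT}(B)$ is the maximum-weight independent subset of $B$, and $\mathrm{OPT}^m_{\mathrm{large}}(B)$ is the set of the $m$ largest-weight elements of $\mathrm{OPT}(B)$ (all of $\mathrm{OPT}(B)$ if it has fewer than $m$ elements). The backward rank $\mathrm{brank}(i,B)$ is the number of elements of $\mathrm{OPT}(B)$ of weight less than $w(i)$. Standing convention of the paper: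 by padding $U$ with dummy elements of infinitesimal weight, one assumes $|\mathrm{OPT}(B)|=\mu(B)$ for every $B\in\mathcal F$. *)

From HB Require Import structures.
From mathcomp Require Import all_boot all_order all_algebra.
Set Implicit Arguments. Unset Strict Implicit. Unset Printing Implicit Defensive.
Import Order.TTheory GRing.Theory Num.Theory.
Local Open Scope ring_scope.

(* Ground set U is the whole finite type T. *)

Definition laminar (T : finType) (F : {set {set T}}) : Prop :=
  forall A B, A \in F -> B \in F ->
    [|| A \subset B, B \subset A | [disjoint A & B]].

Definition indep (T : finType) (F : {set {set T}}) (mu : {set T} -> nat)
  (X : {set T}) : bool :=
  [forall A in F, (#|X :&: A| <= mu A)%N].

(* M(i): minimal member of F containing i (chosen of minimal cardinality;
   under laminarity with U \in F it is the unique inclusion-minimal one). *)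
Definition Mset (T : finType) (F : {set {set T}}) (i : T) : {set T} :=
  [arg min_(A < setT | (A \in F) && (i \in A)) #|A|].

Definition OPT_large (T : finType) (R : realFieldType) (w : T -> R)
  (OPTB : {set T}) (m : nat) : {set T} :=
  [set i in OPTB | leq (#|[set j in OPTB | w i < w j]|).+1 m].

Definition brank (T : finType) (R : realFieldType) (w : T -> R)
  (OPTB' : {set T}) (i : T) : nat :=
  #|[set j in OPTB' | w j < w i]|.

Definition gfun (T : finType) (R : realFieldType) (w : T -> R)
  (F : {set {set T}}) (OPT : {set T} -> {set T}) (c : R) (m : nat)
  (B : {set T}) : R :=
  \sum_(i in OPT_large w (OPT B) m)
     \sum_(B' in F | (Mset F i \subset B') && (B' \subset B))
        c ^+ (1 + brank w (OPT B') i).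

From HB Require Import structures.
From mathcomp Require Import all_boot all_order all_algebra.
From mathcomp Require Import zify ring lra.
Set Implicit Arguments. Unset Strict Implicit. Unset Printing Implicit Defensive.
Import Order.TTheory GRing.Theory Num.Theory.
Local Open Scope ring_scope.

(* An element lies in
      OPT Z iff no member of F around it is saturated by heavier elements of
      OPT Z.  Hence for X \subset Y in F, OPT X and OPT Y agree inside X above
      any common element, so for i in L :&: X every element of OPT X is
      lighter than i or lies in L.  Thus brank(i, X) >= mu X - r, where r is
      the rank of i in L :&: X, and a geometric sum over the ranks gives
        sum_(i in L :&: X) c^(1 + brank(i, X)) <= c/(1-c) * mass X,
      with mass X = c^(mu X - |L :&: X|) - c^(mu X).  Relaxing M(i) \subset X
      to i \in X and exchanging the sums: g(m,B) <= c/(1-c) * sum mass X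
      over the members X of F below B.
   2. Mass bound (Section MassBound).  For any L over-filling no member of F,
      the members of F below B carry total mass at most 2 |L :&: B|; this
      follows from the nonnegativity of a superadditive potential, proved by
      induction along the laminar structure.
   3. The theorem combines the two bounds, using L \subset B. *)

Definition heavier (T : finType) (R : realFieldType) (w : T -> R)
  (S : {set T}) (j : T) : {set T} := [set k in S | w j < w k].

(* Position of i when S is listed by decreasing weight (1 for the heaviest). *)
Definition rank_in (T : finType) (R : realFieldType) (w : T -> R)
  (S : {set T}) (i : T) : nat := #|[set j in S | w i <= w j]|.

Lemma ler_sum_subpred (R : numDomainType) (I : finType) (P Q : pred I)
  (f : I -> R) :
  (forall i, P i -> Q i) -> (forall i, Q i -> 0 <= f i) ->
  \sum_(i | P i) f i <= \sum_(i | Q i) f i.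
Proof.
move=> PQ f_ge0; rewrite [X in _ <= X](bigID P) /=.
have -> : \sum_(i | Q i && P i) f i = \sum_(i | P i) f i.
  by apply: eq_bigl => i; case Pi : (P i); rewrite ?andbT ?andbF ?PQ.
by rewrite lerDl; apply: sumr_ge0 => i /andP [Qi _]; exact: f_ge0.
Qed.

Lemma geometric_tail (R : comPzRingType) (c : R) l n : (l <= n)%N ->
  (1 - c) * \sum_(p < l) c ^+ (n - p.+1) = c ^+ (n - l) - c ^+ n.
Proof.
elim: l => [|l IH] hl; first by rewrite big_ord0 subn0 mulr0 subrr.
rewrite big_ord_recr /= mulrDr IH; last by lia.
have -> : (n - l = (n - l.+1).+1)%N by lia.
by rewrite exprS; ring.
Qed.

(* With distinct weights, rank_in S is a bijection from S onto 1..|S|, so any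
   function of the rank sums to the same value as over 1..|S|. *)
Lemma sum_over_ranks (T : finType) (R : realFieldType) (V : nmodType)
  (w : T -> R) (f : nat -> V) : injective w ->
  forall S : {set T}, \sum_(i in S) f (rank_in w S i) = \sum_(p < #|S|) f p.+1.
Proof.
move=> w_inj S; move Es : #|S| => s; elim: s S Es => [|s IH] S hS.
  by move/eqP: hS; rewrite cards_eq0 => /eqP ->; rewrite big_set0 big_ord0.
have : (0 < #|S|)%N by rewrite hS.
rewrite card_gt0 => /set0Pn [x xS].
have [k kS maxk] := @arg_maxnP _ x (fun i => i \in S) (rank_in w S) xS.
have lightest j : j \in S -> w k <= w j.
  move=> jS; rewrite leNgt; apply/negP => jk.
  have sb : [set l in S | w k <= w l] \subset [set l in S | w j <= w l] :\ j.
    apply/subsetP => l; rewrite !inE => /andP [-> h].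
    rewrite (le_trans (ltW jk) h) !andbT.
    by apply/eqP => e; rewrite e leNgt jk in h.
  have e := cardsD1 j [set l in S | w j <= w l]; rewrite !inE jS lexx /= in e.
  by move: (subset_leq_card sb) e (maxk j jS); rewrite /rank_in; lia.
have rank_k : rank_in w S k = s.+1.
  rewrite /rank_in -hS; apply: eq_card => l; rewrite !inE.
  by case lS : (l \in S); rewrite //= (lightest _ lS).
rewrite (big_setD1 k kS) /= rank_k big_ord_recr /= addrC; congr (_ + _).
have hS' : #|S :\ k| = s by move: (cardsD1 k S); rewrite kS hS; lia.
rewrite -(IH (S :\ k) hS'); apply: eq_bigr => i; rewrite !inE => /andP [ik iS].
congr (f _); rewrite /rank_in; apply: eq_card => l; rewrite !inE.
case: (eqVneq l k) => [->|//]; rewrite kS /=; apply/negP => h.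
have /w_inj e : w k = w i by apply/le_anti; rewrite h lightest.
by rewrite e eqxx in ik.
Qed.

(* The mass of a set X holding l elements of L: c^(mu X - l) - c^(mu X), that
   is (1 - c) times the sum of c^(mu X - r) over the ranks r = 1..l. *)
Definition mass (T : finType) (R : realFieldType) (mu : {set T} -> nat)
  (c : R) (L X : {set T}) : R :=
  c ^+ (mu X - #|L :&: X|) - c ^+ mu X.

Section LaminarFamily.
Variables (T : finType) (R : realFieldType).
Variables (F : {set {set T}}) (mu : {set T} -> nat).
Hypothesis F_laminar : laminar F.
Hypothesis mu_strict : forall A B, A \in F -> B \in F -> A \proper B ->
  (mu A < mu B)%N.

Lemma laminar_nested A B x : A \in F -> B \in F -> x \in A -> x \in B ->
  A \subset B \/ B \subset A.
Proof.
move=> AF BF xA xB; case/or3P: (F_laminar AF BF) => [->|->|d]; [by left|by right|].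
by rewrite (disjointFr d xA) in xB.
Qed.

Lemma mu_mono A B : A \in F -> B \in F -> A \subset B -> (mu A <= mu B)%N.
Proof.
move=> AF BF AB; case: (eqVneq A B) => [-> //|ne].
by apply/ltnW/mu_strict; rewrite ?properEneq ?ne.
Qed.

Section Greedy.
Variables (w : T -> R) (OPT : {set T} -> {set T}).
Hypothesis w_inj : injective w.
Hypothesis OPT_max : forall B, B \in F ->
  [/\ OPT B \subset B, indep F mu (OPT B) &
      forall Y : {set T}, Y \subset B -> indep F mu Y ->
        \sum_(j in Y) w j <= \sum_(j in OPT B) w j].
Hypothesis OPT_card : forall B, B \in F -> #|OPT B| = mu B.

Lemma OPT_sub Z : Z \in F -> OPT Z \subset Z.
Proof. by case/OPT_max. Qed.

Lemma OPT_cap Z A : Z \in F -> A \in F -> (#|OPT Z :&: A| <= mu A)%N.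
Proof. by move=> ZF AF; case/OPT_max: ZF => _ /forallP /(_ A) /implyP ->. Qed.

Lemma OPT_heavier_unsaturated Z A j : Z \in F -> j \in OPT Z -> A \in F ->
  j \in A -> (#|heavier w (OPT Z :&: A) j| < mu A)%N.
Proof.
move=> ZF jO AF jA.
have sub : heavier w (OPT Z :&: A) j \subset (OPT Z :&: A) :\ j.
  apply/subsetP => k; rewrite !inE => /andP [-> hk]; rewrite andbT.
  by apply/eqP => kj; rewrite kj ltxx in hk.
have e := cardsD1 j (OPT Z :&: A); rewrite !inE jO jA /= in e.
by have := subset_leq_card sub; have := OPT_cap ZF AF; lia.
Qed.

(* Exchange: swapping an element k of OPT Z for a heavier j of Z would
   increase the weight, so the result cannot be independent. *)
Lemma heavier_swap_dependent Z j k : Z \in F -> j \in Z -> j \notin OPT Z ->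
  k \in OPT Z -> w k < w j -> ~~ indep F mu (j |: OPT Z :\ k).
Proof.
move=> ZF jZ jnO kO wkj; apply/negP => ind.
have [OZ _ opt] := OPT_max ZF.
have sub : j |: OPT Z :\ k \subset Z.
  by rewrite subUset sub1set jZ (subset_trans (subsetDl _ _) OZ).
have := opt _ sub ind.
have jnD : j \notin OPT Z :\ k by rewrite !inE (negbTE jnO) andbF.
by rewrite big_setU1 //= [X in _ <= X](big_setD1 k kO) /=; lra.
Qed.

Lemma swap_indep Z j k : Z \in F -> k \in OPT Z ->
  (forall A, A \in F -> j \in A -> k \notin A -> (#|OPT Z :&: A| < mu A)%N) ->
  indep F mu (j |: OPT Z :\ k).
Proof.
move=> ZF kO room; apply/forallP => A; apply/implyP => AF.
have capA := OPT_cap ZF AF.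
have [jA|jnA] := boolP (j \in A); last first.
  apply: leq_trans capA; apply: subset_leq_card; apply/subsetP => x.
  rewrite !inE => /andP [/orP [/eqP ->|/andP [_ ->]] xA] //.
  by rewrite xA in jnA.
have [kA|knA] := boolP (k \in A).
  have s : (j |: OPT Z :\ k) :&: A \subset j |: ((OPT Z :&: A) :\ k).
    by apply/subsetP => x; rewrite !inE => /andP [/orP [->|/andP [-> ->]] ->];
      rewrite ?orbT.
  apply: leq_trans (subset_leq_card s) _.
  have e := cardsD1 k (OPT Z :&: A); rewrite !inE kO kA /= in e.
  by rewrite cardsU1; move: (leq_b1 (j \notin (OPT Z :&: A) :\ k)); lia.
have s : (j |: OPT Z :\ k) :&: A \subset j |: (OPT Z :&: A).
  by apply/subsetP => x; rewrite !inE => /andP [/orP [->|/andP [_ ->]] ->];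
    rewrite ?orbT.
apply: leq_trans (subset_leq_card s) _; rewrite cardsU1.
by move: (leq_b1 (j \notin OPT Z :&: A)) (room A AF jA knA); lia.
Qed.

(* Around an element j of Z outside OPT Z, some set of F is saturated by the
   heavier elements of OPT Z: take a smallest tight set around j. *)
Lemma nonOPT_heavier_saturated Z j : Z \in F -> j \in Z -> j \notin OPT Z ->
  exists2 A, A \in F & (j \in A) && (mu A <= #|heavier w (OPT Z :&: A) j|)%N.
Proof.
move=> ZF jZ jnO.
pose tight A := [&& A \in F, j \in A & (mu A <= #|OPT Z :&: A|)%N].
have tightZ : tight Z by rewrite /tight ZF jZ (setIidPl (OPT_sub ZF)) OPT_card ?leqnn.
have [A0 /and3P [A0F jA0 tA0] minA0] :=
  @arg_minnP _ Z tight (fun A => #|A|) tightZ.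
exists A0 => //; rewrite jA0 /=; apply: leq_trans tA0 _.
apply/subset_leq_card/subsetP => k kOA; rewrite inE kOA /=.
move: kOA; rewrite inE => /andP [kO kA0].
rewrite ltNge le_eqVlt negb_or; apply/andP; split.
  by apply/eqP => /w_inj e; rewrite -e kO in jnO.
apply/negP => wkj.
have /negP := heavier_swap_dependent ZF jZ jnO kO wkj; apply.
apply: swap_indep => // A AF jA knA; rewrite ltnNge; apply/negP => tA.
have AA0 : A \proper A0.
  rewrite properEneq; case: (laminar_nested AF A0F jA jA0) => [->|A0A].
    by rewrite andbT; apply: contraNneq knA => ->.
  by rewrite (subsetP A0A _ kA0) in knA.
by have := minA0 A; rewrite /tight AF jA tA leqNgt (proper_card AA0) => /(_ isT).
Qed.

(* If X is a subset of Y and i lies in X and OPT Y, then OPT X and OPT Y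
   contain the same elements of X heavier than i (induction on the number of
   still heavier elements, using the two characterisations above). *)
Lemma OPT_agree_above X Y i : X \in F -> Y \in F -> X \subset Y ->
  i \in OPT Y -> i \in X ->
  forall j, j \in X -> w i < w j -> (j \in OPT X) = (j \in OPT Y).
Proof.
move=> XF YF XY iO iX j.
move Ek : #|[set k | w j < w k]| => n; elim/ltn_ind: n j Ek => n IH j Ek jX ij.
have agree (A : {set T}) : A \subset X ->
    heavier w (OPT X :&: A) j = heavier w (OPT Y :&: A) j.
  move=> AX; apply/setP => k; rewrite !inE.
  have [jk|] := boolP (w j < w k); rewrite ?andbF ?andbT //.
  have [kA|] := boolP (k \in A); rewrite ?andbF ?andbT //.
  apply: (IH _ _ k erefl (subsetP AX _ kA) (lt_trans ij jk)); rewrite -Ek.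
  apply: proper_card; rewrite properE; apply/andP; split.
    by apply/subsetP => l; rewrite !inE; exact: lt_trans.
  by apply/subsetPn; exists k; rewrite !inE ?ltxx.
have jY : j \in Y := subsetP XY _ jX.
apply/idP/idP => jO; apply: contraT => jnO.
- have [A AF /andP [jA hA]] := nonOPT_heavier_saturated YF jY jnO.
  case: (laminar_nested AF XF jA jX) => s.
    by rewrite -(agree _ s) leqNgt (OPT_heavier_unsaturated XF jO AF jA) in hA.
  have h := OPT_heavier_unsaturated YF iO AF (subsetP s _ iX).
  have sub : heavier w (OPT Y :&: A) j \subset heavier w (OPT Y :&: A) i.
    by apply/subsetP => k; rewrite !inE => /andP [-> h']; exact: lt_trans h'.
  by move: (leq_trans hA (subset_leq_card sub)); rewrite leqNgt h.
- have [A AF /andP [jA hA]] := nonOPT_heavier_saturated XF jX jnO.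
  have [sAX|nAX] := boolP (A \subset X).
    by rewrite (agree _ sAX) leqNgt (OPT_heavier_unsaturated YF jO AF jA) in hA.
  case: (laminar_nested AF XF jA jX); first by rewrite (negbTE nAX).
  move=> sXA; have h : (mu X < mu A)%N by rewrite mu_strict // properE sXA.
  have sub : heavier w (OPT X :&: A) j \subset OPT X.
    by apply/subsetP => k; rewrite !inE => /andP [/andP [-> _] _].
  by move: (leq_trans hA (subset_leq_card sub)); rewrite (OPT_card XF) leqNgt h.
Qed.


Section LargeElements.
(* Inside any X of F below
   B, the elements of OPT X lighter than i together with the elements of L in
   X at least as heavy as i fill OPT X, which bounds the backward rank of i. *)
Variables (B : {set T}) (m : nat).
Hypothesis B_F : B \in F.
Local Notation L := (OPT_large w (OPT B) m).

Lemma large_sub : L \subset OPT B.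
Proof. by apply/subsetP => x; rewrite inE => /andP []. Qed.

Lemma large_up i j : i \in L -> j \in OPT B -> w i < w j -> j \in L.
Proof.
rewrite !inE => /andP [iO hi] jO ij; rewrite jO /=; apply: leq_trans hi.
by rewrite ltnS; apply/subset_leq_card/subsetP => k; rewrite !inE => /andP [-> /(lt_trans ij)].
Qed.

Lemma large_cap X : X \in F -> (#|L :&: X| <= mu X)%N.
Proof.
move=> XF; apply: leq_trans (OPT_cap B_F XF).
by apply/subset_leq_card/setSI/large_sub.
Qed.

Lemma brank_rank_ge X i : X \in F -> X \subset B -> i \in L -> i \in X ->
  (mu X <= brank w (OPT X) i + rank_in w (L :&: X) i)%N.
Proof.
move=> XF XB iL iX; have iO : i \in OPT B := subsetP large_sub _ iL.
rewrite -(OPT_card XF).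
have s : OPT X \subset [set j in OPT X | w j < w i]
                       :|: [set j in L :&: X | w i <= w j].
  apply/subsetP => j jO; rewrite in_setU.
  have [ji|] := boolP (w j < w i); first by rewrite in_set jO ji.
  rewrite -leNgt => ij; apply/orP; right.
  have jX : j \in X := subsetP (OPT_sub XF) _ jO.
  rewrite inE in_setI ij jX !andbT; have [-> //|ne] := eqVneq j i.
  have {}ij : w i < w j.
    by rewrite lt_neqAle ij andbT; apply: contra_neq ne => /w_inj ->.
  by apply: (large_up iL _ ij); rewrite -(OPT_agree_above XF B_F XB iO iX jX ij).
by apply: leq_trans (subset_leq_card s) (leq_card_setU _ _).
Qed.

Variable c : R.
Hypothesis c_ge0 : 0 <= c.
Hypothesis c_lt1 : c < 1.

Lemma node_bound X : X \in F -> X \subset B ->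
  \sum_(i in L :&: X) c ^+ (1 + brank w (OPT X) i)
    <= c / (1 - c) * mass mu c L X.
Proof.
move=> XF XB; have lmu := large_cap XF.
apply: le_trans (_ : \sum_(i in L :&: X) c * c ^+ (mu X - rank_in w (L :&: X) i)
                     <= _).
  apply: ler_sum => i; rewrite inE => /andP [iL iX].
  rewrite add1n exprS ler_wpM2l // (ler_wiXn2l c_ge0 (ltW c_lt1)) //.
  by move: (brank_rank_ge XF XB iL iX); lia.
rewrite -mulr_sumr (sum_over_ranks (fun p => c ^+ (mu X - p)) w_inj).
rewrite /mass -(geometric_tail c lmu) mulrA divfK // subr_eq0.
by rewrite eq_sym lt_eqF.
Qed.

(* Summing the node bounds over all X below B: relax M(i) \subset X to
   i \in X and exchange the two sums. *)
Lemma gfun_le_mass : setT \in F ->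
  gfun w F OPT c m B <= c / (1 - c) * \sum_(X in F | X \subset B) mass mu c L X.
Proof.
move=> FT; rewrite /gfun mulr_sumr.
apply: le_trans (_ : \sum_(i in L) \sum_(X in F | (i \in X) && (X \subset B))
                       c ^+ (1 + brank w (OPT X) i) <= _).
  apply: ler_sum => i _; apply: ler_sum_subpred => [X|X _]; last exact: exprn_ge0.
  case/and3P => XF MX XB; rewrite XF XB (subsetP MX) //.
  by rewrite /Mset; case: arg_minnP => [|A /andP [_ ->] //]; rewrite FT inE.
rewrite (exchange_big_dep (fun X : {set T} => (X \in F) && (X \subset B))) /=;
  last by move=> i X _ /and3P [-> _ ->].
apply: ler_sum => X /andP [XF XB].
rewrite (eq_bigl (mem (L :&: X))) ?node_bound // => i.
by rewrite XF XB andbT [RHS]inE.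
Qed.

End LargeElements.
End Greedy.

Section MassBound.
(* By induction, a potential function
   is nonnegative on every union S of members of F of
   capacity < n (a set "closed below n"): S splits off a block (a maximal
   such member, or a single point) and the potential is superadditive. *)
Variables (c : R) (L : {set T}).
Hypothesis c_ge0 : 0 <= c.
Hypothesis c_lt1 : c < 1.
Hypothesis L_cap : forall X, X \in F -> (#|L :&: X| <= mu X)%N.

Local Notation lc S := #|L :&: S|.
Local Notation mass := (mass mu c L).

Lemma c_le1 : c <= 1. Proof. exact: ltW. Qed.
Lemma cX_ge0 k : 0 <= c ^+ k. Proof. exact: exprn_ge0. Qed.
Lemma cX_le1 k : c ^+ k <= 1. Proof. exact: exprn_ile1 c_ge0 c_le1. Qed.
Lemma cX_anti a b : (a <= b)%N -> c ^+ b <= c ^+ a.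
Proof. by move=> ab; rewrite (ler_wiXn2l c_ge0 c_le1 ab). Qed.

Lemma mass_ge0 X : 0 <= mass X.
Proof. by rewrite /mass subr_ge0; apply: cX_anti; exact: leq_subr. Qed.

Definition small_mass (S : {set T}) (n : nat) : R :=
  \sum_(Y in F | (Y \subset S) && (mu Y < n)%N) mass Y.

(* Potential of a set S for the capacity bound n: the target bound on the
   (1 - c)-scaled small mass, minus a correction that makes it superadditive. *)
Definition potential (S : {set T}) (n : nat) : R :=
  2 * (1 - c) * (lc S)%:R - (1 - c ^+ lc S) * (1 + c ^+ (n - lc S))
  - (1 - c) * small_mass S n.

Definition closed_below (n : nat) (S : {set T}) : Prop :=
  forall Y x, Y \in F -> (mu Y < n)%N -> x \in Y -> x \in S -> Y \subset S.

Definition splits (n : nat) (S S1 S2 : {set T}) : Prop :=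
  forall Y, Y \in F -> Y \subset S -> (mu Y < n)%N ->
    (Y \subset S1) || (Y \subset S2).

Lemma small_mass_split (S S1 S2 : {set T}) n : splits n S S1 S2 ->
  small_mass S n <= small_mass S1 n + small_mass S2 n.
Proof.
move=> H; rewrite /small_mass (bigID (fun Y : {set T} => Y \subset S1)) /=.
apply: lerD; apply: ler_sum_subpred => [Y|Y _]; try exact: mass_ge0.
  by case/andP => /andP [-> /andP [_ ->]] ->.
case/andP => /andP [YF /andP [YS Yn]] nY; rewrite YF Yn andbT.
by move: (H Y YF YS Yn); rewrite (negbTE nY).
Qed.

Lemma potential_base (S : {set T}) n : (lc S <= 1)%N ->
  (forall Y, Y \in F -> Y \subset S -> (mu Y < n)%N -> lc Y = 0%N) ->
  0 <= potential S n.
Proof.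
move=> hl hY.
have small0 : small_mass S n = 0.
  by rewrite /small_mass big1 // => Y /and3P [YF YS Yn]; rewrite /mass hY ?subn0 ?subrr.
have h1 := cX_le1 (n - lc S); have c1 := c_lt1.
rewrite /potential small0 mulr0 subr0.
move: h1; case: (lc S) hl => [|[|//]] _ h1; first by rewrite expr0 mulr0n; lra.
have : 0 <= (1 - c) * (1 - c ^+ (n - 1)) by apply: mulr_ge0; lra.
by rewrite expr1 mulr1n; lra.
Qed.

Lemma potential_merge (S1 S2 : {set T}) n : [disjoint S1 & S2] ->
  (lc (S1 :|: S2) <= n)%N -> splits n (S1 :|: S2) S1 S2 ->
  potential S1 n + potential S2 n <= potential (S1 :|: S2) n.
Proof.
move=> d hl hs; have {}hs := small_mass_split hs.
have e : lc (S1 :|: S2) = (lc S1 + lc S2)%N.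
  by rewrite setIUr cardsU setIACA (disjoint_setI0 d) setI0 cards0 subn0.
rewrite e in hl; rewrite /potential e.
move: (lc S1) (lc S2) hl => l1 l2 hl.
set E := c ^+ (n - (l1 + l2)).
have e1 : c ^+ (n - l1) = E * c ^+ l2 by rewrite -exprD; congr (_ ^+ _); lia.
have e2 : c ^+ (n - l2) = E * c ^+ l1 by rewrite -exprD; congr (_ ^+ _); lia.
rewrite e1 e2 exprD natrD.
have hQ := cX_le1 l1; have hy := cX_le1 l2; have hE : E <= 1 by exact: cX_le1.
have h1 : 0 <= (1 - c ^+ l1) * (1 - c ^+ l2) * (1 - E).
  by apply: mulr_ge0; [apply: mulr_ge0|]; rewrite subr_ge0.
have h2 : (1 - c) * small_mass (S1 :|: S2) n
          <= (1 - c) * (small_mass S1 n + small_mass S2 n).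
  by apply: ler_wpM2l => //; rewrite subr_ge0; exact: c_le1.
lra.
Qed.

(* Raising the capacity threshold from mu Y past mu Y adds the mass of Y
   itself, which the potential absorbs. *)
Lemma potential_raise (Y : {set T}) n : Y \in F -> (mu Y < n)%N ->
  potential Y (mu Y) <= potential Y n.
Proof.
move=> YF hn; have hl := L_cap YF.
have hs : small_mass Y n <= mass Y + small_mass Y (mu Y).
  apply: le_trans (_ : small_mass Y (mu Y).+1 <= _).
    apply: ler_sum_subpred => [Z /and3P [ZF ZY _]|Z _]; last exact: mass_ge0.
    by rewrite ZF ZY ltnS mu_mono.
  rewrite /small_mass (bigD1 Y) /=; last by rewrite YF subxx ltnSn.
  apply: lerD => //; apply: ler_sum_subpred => [Z|Z _]; last exact: mass_ge0.
  case/andP => /and3P [ZF ZY _] nZ; rewrite ZF ZY /=.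
  by apply: mu_strict => //; rewrite properEneq nZ ZY.
rewrite /potential; rewrite /mass in hs.
move: (lc Y) hl hs => l hl hs.
set a := c ^+ (mu Y - l).
have ea : c ^+ mu Y = a * c ^+ l by rewrite /a -exprD subnK.
rewrite ea in hs.
have h1 : c ^+ (n - l) <= c * a by rewrite /a -exprS; apply: cX_anti; lia.
have hq : 0 <= 1 - c ^+ l by rewrite subr_ge0; exact: cX_le1.
have h1' := ler_wpM2l hq h1.
have h2 : (1 - c) * small_mass Y n
          <= (1 - c) * (a - a * c ^+ l + small_mass Y (mu Y)).
  by apply: ler_wpM2l => //; rewrite subr_ge0; exact: c_le1.
lra.
Qed.

Lemma closed_below_self (Y : {set T}) : Y \in F -> closed_below (mu Y) Y.
Proof.
move=> YF Z z ZF hZ zZ zY; case: (laminar_nested ZF YF zZ zY) => // s.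
by move: hZ; rewrite ltnNge mu_mono.
Qed.

Lemma potential_split (S P : {set T}) n : P \subset S -> (lc S <= n)%N ->
  splits n S P (S :\: P) ->
  potential P n + potential (S :\: P) n <= potential S n.
Proof.
move=> PS hl hs; have eS : P :|: S :\: P = S by rewrite -{1}(setIidPr PS) setID.
rewrite -{2}eS; apply: potential_merge; rewrite ?eS //.
by rewrite disjoints_subset; apply/subsetP => z zP; rewrite !inE zP.
Qed.

Lemma closed_below_diff n (S P : {set T}) : closed_below n S ->
  splits n S P (S :\: P) -> closed_below n (S :\: P).
Proof.
move=> Sc hs Z z ZF Zn zZ; rewrite inE => /andP [znP zS].
have ZS := Sc Z z ZF Zn zZ zS.
by case/orP: (hs Z ZF ZS Zn) => // /subsetP /(_ z zZ); rewrite (negbTE znP).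
Qed.

Lemma maximal_block_splits n (S Y : {set T}) x : closed_below n S ->
  x \in S -> Y \in F -> x \in Y -> (mu Y < n)%N ->
  (forall Z, Z \in F -> x \in Z -> (mu Z < n)%N -> (mu Z <= mu Y)%N) ->
  Y \subset S /\ splits n S Y (S :\: Y).
Proof.
move=> Sc xS YF xY Yn maxY; split; first exact: Sc xS.
move=> Z ZF ZS Zn; have [dZY|] := boolP [disjoint Z & Y].
  apply/orP; right; apply/subsetP => z zZ; rewrite inE (subsetP ZS _ zZ) andbT.
  by rewrite (disjointFr dZY zZ).
rewrite -setI_eq0 => /set0Pn [z]; rewrite inE => /andP [zZ zY].
case: (laminar_nested ZF YF zZ zY) => [-> //|YZ].
have := maxY Z ZF (subsetP YZ _ xY) Zn.
case: (eqVneq Y Z) => [-> _|ne]; first by rewrite subxx.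
by rewrite leqNgt mu_strict // properEneq ne YZ.
Qed.

Lemma potential_block n (S : {set T}) x :
  (forall Y, Y \in F -> (mu Y < n)%N -> 0 <= potential Y (mu Y)) ->
  closed_below n S -> x \in S ->
  exists P : {set T}, [/\ x \in P, P \subset S, 0 <= potential P n &
                          splits n S P (S :\: P)].
Proof.
move=> IH Sc xS.
have [/existsP [Y0 PY0]|noY] :=
  boolP [exists Y, [&& Y \in F, x \in Y & (mu Y < n)%N]].
  have [Y /and3P [YF xY Yn] maxY] :=
    @arg_maxnP _ Y0 (fun Y => [&& Y \in F, x \in Y & (mu Y < n)%N]) mu PY0.
  have [YS hs] : Y \subset S /\ splits n S Y (S :\: Y).
    apply: (maximal_block_splits Sc xS YF xY Yn) => Z ZF xZ Zn.
    by apply: maxY; rewrite ZF xZ.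
  exists Y; split=> //; apply: le_trans (IH Y YF Yn) (potential_raise YF Yn).
have xnZ Z : Z \in F -> (mu Z < n)%N -> x \notin Z.
  by move=> ZF Zn; apply: contra noY => xZ; apply/existsP; exists Z; rewrite ZF xZ.
exists [set x]; split; rewrite ?inE ?sub1set //.
- apply: potential_base => [|Z ZF /subsetP Zx Zn].
    by rewrite (leq_trans (subset_leq_card (subsetIr _ _))) ?cards1.
  apply/eqP; rewrite cards_eq0 -subset0; apply/subsetP => z; rewrite inE.
  by case/andP => _ zZ; move: (Zx z zZ) (xnZ Z ZF Zn); rewrite inE => /eqP <-; rewrite zZ.
- move=> Z ZF ZS Zn; apply/orP; right; apply/subsetP => z zZ.
  rewrite !inE (subsetP ZS _ zZ) andbT; apply: contraNneq (xnZ Z ZF Zn).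
  by move <-.
Qed.

Lemma potential_ge0 n (S : {set T}) : closed_below n S -> (lc S <= n)%N ->
  0 <= potential S n.
Proof.
elim/ltn_ind: n S => n IHn S.
have IHF Y : Y \in F -> (mu Y < n)%N -> 0 <= potential Y (mu Y).
  by move=> YF Yn; apply: IHn => //; [exact: closed_below_self|exact: L_cap].
move Es : #|S| => s; elim/ltn_ind: s S Es => s IHs S Es Sc Sn.
have [->|[x xS]] := set_0Vmem S.
  apply: potential_base => [|Y _ YS _]; first by rewrite setI0 cards0.
  by apply/eqP; rewrite cards_eq0 -subset0 (subset_trans (subsetIr _ _) YS).
have [P [xP PS P0 hs]] := potential_block IHF Sc xS.
have := potential_split PS Sn hs.
suff : 0 <= potential (S :\: P) n by lra.
apply: (IHs #|S :\: P|) => //.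
- rewrite -Es; apply: proper_card; rewrite properE subsetDl.
  by apply/subsetPn; exists x; rewrite ?inE ?xP.
- exact: closed_below_diff.
- by apply: leq_trans Sn; apply/subset_leq_card/setIS/subsetDl.
Qed.

Lemma total_mass_bound B : B \in F ->
  \sum_(X in F | X \subset B) mass X <= 2 * (lc B)%:R.
Proof.
move=> BF; have c1 := c_lt1.
have hB : 0 <= potential B (mu B).+1.
  apply: le_trans (potential_raise BF (ltnSn _)).
  by apply: potential_ge0; [exact: closed_below_self|exact: L_cap].
have hs : \sum_(X in F | X \subset B) mass X <= small_mass B (mu B).+1.
  apply: ler_sum_subpred => [X /andP [XF XB]|X _]; last exact: mass_ge0.
  by rewrite XF XB ltnS mu_mono.
have hq : 0 <= (1 - c ^+ lc B) * (1 + c ^+ ((mu B).+1 - lc B)).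
  by apply: mulr_ge0; have := cX_le1 (lc B); have := cX_ge0 ((mu B).+1 - lc B); lra.
rewrite -(ler_pM2l (_ : 0 < 1 - c)); last by lra.
have := ler_wpM2l (_ : 0 <= 1 - c) hs; rewrite /potential in hB; lra.
Qed.

End MassBound.
End LaminarFamily.

Theorem lemma3 (T : finType) (R : realFieldType) (w : T -> R)
  (F : {set {set T}}) (mu : {set T} -> nat) (OPT : {set T} -> {set T})
  (c : R) :
  (forall i, 0 <= w i) ->
  injective w ->
  laminar F ->
  setT \in F ->
  (forall A, A \in F -> (0 < mu A)%N) ->
  (forall A B, A \in F -> B \in F -> A \proper B -> (mu A < mu B)%N) ->
  (* OPT(B) is a maximum-weight independent subset of B *)
  (forall B, B \in F ->
     [/\ OPT B \subset B, indep F mu (OPT B) &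
         forall Y : {set T}, Y \subset B -> indep F mu Y ->
           \sum_(j in Y) w j <= \sum_(j in OPT B) w j]) ->
  (* standing padding convention: |OPT(B)| = mu(B) *)
  (forall B, B \in F -> #|OPT B| = mu B) ->
  0 < c -> c < 1 / 2 ->
  forall (B : {set T}) (m : nat), B \in F ->
    gfun w F OPT c m B <= (2 * c / (1 - c)) * (#|OPT_large w (OPT B) m|)%:R.
Proof.
move=> _ w_inj F_lam F_top _ mu_strict OPT_max OPT_card c_gt0 c_small B m B_F.
have c_ge0 : 0 <= c := ltW c_gt0.
have c_lt1 : c < 1 by lra.
set L := OPT_large w (OPT B) m.
have L_B : L :&: B = L.
  by apply/setIidPl/(subset_trans (large_sub w OPT B m))/(OPT_sub OPT_max B_F).
have L_cap := large_cap OPT_max m B_F.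
have total := total_mass_bound F_lam mu_strict c_ge0 c_lt1 L_cap B_F.
rewrite L_B in total.
apply: le_trans (gfun_le_mass F_lam mu_strict w_inj OPT_max OPT_card m B_F
                    c_ge0 c_lt1 F_top) _.
have coef_ge0 : 0 <= c / (1 - c) by rewrite divr_ge0 // subr_ge0 ltW.
have -> : 2 * c / (1 - c) * (#|L|)%:R = c / (1 - c) * (2 * (#|L|)%:R) by ring.
exact: ler_wpM2l.
Qed.
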